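(* Let $(t_k)_{k\in\mathbb{N}}$ be a strictly increasing sequence with $t_1=\pi/4$ and $t_k\to\pi/2$, let $v_k=(\cos t_k,\sin t_k)\in\mathbb{R}^2$, $a=(-2,2)$, $b=(2,2)$, and $C_1'=\{a\}$, $C_2'=\{b\}$, $C_3'=\overline{\mathrm{co}}\{v_k:k\in\mathbb{N}\}$. Let $k\in\mathbb{N}$ and $d_k=\frac{v_{k+1}-v_k}{\|v_{k+1}-v_k\|}$. Then for every point $c$ of the half-open segment $[v_k,v_{k+1})=\{(1-s)v_k+sv_{k+1}: s\in[0,1)\}$, the number $$\varepsilon(c)=1+\frac{\langle b-c,d_k\rangle}{\langle a-c,d_k\rangle}$$ is well defined and lies in $(0,1)$, and the triple $(a,b,c)$ is the support of an $\varepsilon(c)$-cycle $(u_1',u_2',u_3')$ for $C_1',C_2',C_3'$.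
   Context: For a nonempty closed convex set $C\subseteq\mathbb{R}^2$, $\Pi_C(u)$ denotes the Euclidean projection of $u$ onto $C$. For three nonempty closed convex sets $D_1,D_2,D_3$ and $\varepsilon\in(0,1]$, an $\varepsilon$-cycle is a triple $(u_1,u_2,u_3)$ with $u_1=u_3+\varepsilon(\Pi_{D_1}(u_3)-u_3)$, $u_2=u_1+\varepsilon(\Pi_{D_2}(u_1)-u_1)$, $u_3=u_2+\varepsilon(\Pi_{D_3}(u_2)-u_2)$; its support is the triple $(\Pi_{D_1}(u_3),\Pi_{D_2}(u_1),\Pi_{D_3}(u_2))$. $\overline{\mathrm{co}}$ denotes closed convex hull and $\langle\cdot,\cdot\rangle$ the Euclidean inner product. *)

From Stdlib Require Import Reals.
Open Scope R_scope.

Definition pt := (R * R)%type.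

Definition padd (x y : pt) : pt := (fst x + fst y, snd x + snd y).
Definition psub (x y : pt) : pt := (fst x - fst y, snd x - snd y).
Definition pscal (r : R) (x : pt) : pt := (r * fst x, r * snd x).
Definition dot (x y : pt) : R := fst x * fst y + snd x * snd y.
Definition pnorm (x : pt) : R := sqrt (dot x x).

Definition convex (C : pt -> Prop) : Prop :=
  forall x y (l : R), C x -> C y -> 0 <= l <= 1 ->
    C (padd (pscal (1 - l) x) (pscal l y)).

Definition closed (C : pt -> Prop) : Prop :=
  forall x, (forall e, 0 < e -> exists y, C y /\ pnorm (psub x y) < e) -> C x.

Definition clco (S : pt -> Prop) : pt -> Prop :=
  fun x => forall C, convex C -> closed C -> (forall y, S y -> C y) -> C x.

Definition is_proj (C : pt -> Prop) (u p : pt) : Prop :=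
  C p /\ forall q, C q -> pnorm (psub u p) <= pnorm (psub u q).

Definition eps_cycle_support (D1 D2 D3 : pt -> Prop) (eps : R)
  (u1 u2 u3 p1 p2 p3 : pt) : Prop :=
  0 < eps <= 1 /\
  is_proj D1 u3 p1 /\ is_proj D2 u1 p2 /\ is_proj D3 u2 p3 /\
  u1 = padd u3 (pscal eps (psub p1 u3)) /\
  u2 = padd u1 (pscal eps (psub p2 u1)) /\
  u3 = padd u2 (pscal eps (psub p3 u2)).

(* The relaxed projections onto the singletons {a}, {b} are affine, so once the
   support (a, b, c) is fixed the three cycle equations force
   u2 - c = ((b - c) + r (a - c)) / (1 + r + r^2) with r = 1 - eps.  This is a
   legitimate projection onto C3' exactly when u2 - c is an outward normal of C3'
   at c.  Choosing r so that u2 - c is orthogonal to the chord [v_k, v_(k+1)]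
   gives the formula for eps, and the geometry of the arc (slope of the chord
   between -1 and 0, c in the first octant above the diagonal) makes 0 < r < 1
   and makes u2 - c point away from the origin.  Since every v_n lies on the arc
   outside the open chord, it lies on the inner side of the chord line, hence so
   does the closed convex hull C3'. *)

From Stdlib Require Import Reals Lra Lia.
Open Scope R_scope.

Definition perp (x : pt) : pt := (snd x, - fst x).

Definition cis (theta : R) : pt := (cos theta, sin theta).

Definition halfspace (x c0 : pt) : pt -> Prop := fun q => dot x (psub q c0) <= 0.

Lemma dot_padd_l (x y z : pt) : dot (padd x y) z = dot x z + dot y z.
Proof. unfold dot, padd; simpl; ring. Qed.

Lemma dot_padd_r (x y z : pt) : dot x (padd y z) = dot x y + dot x z.
Proof. unfold dot, padd; simpl; ring. Qed.

Lemma dot_psub_r (x y z : pt) : dot x (psub y z) = dot x y - dot x z.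
Proof. unfold dot, psub; simpl; ring. Qed.

Lemma dot_pscal_l (l : R) (x y : pt) : dot (pscal l x) y = l * dot x y.
Proof. unfold dot, pscal; simpl; ring. Qed.

Lemma dot_pscal_r (l : R) (x y : pt) : dot x (pscal l y) = l * dot x y.
Proof. unfold dot, pscal; simpl; ring. Qed.

Lemma dot_perp_decomp (x y d : pt) :
  dot d d * dot x y = dot x d * dot d y + dot x (perp d) * dot (perp d) y.
Proof. unfold dot, perp; simpl; ring. Qed.

Lemma dot_nonpos_of_orth (x y d : pt) :
  0 < dot d d -> dot x d = 0 -> 0 <= dot x (perp d) -> dot (perp d) y <= 0 ->
  dot x y <= 0.
Proof.
  intros hd hxd hxn hny.
  pose proof (dot_perp_decomp x y d) as E. rewrite hxd in E.
  nra.
Qed.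

Lemma dot_le_pnorm (x z : pt) : dot x z <= pnorm x * pnorm z.
Proof.
  destruct x as [x1 x2], z as [z1 z2]. unfold pnorm, dot; simpl.
  rewrite <- sqrt_mult_alt by nra.
  destruct (Rle_or_lt (x1 * z1 + x2 * z2) 0) as [h|h].
  - pose proof (sqrt_pos ((x1 * x1 + x2 * x2) * (z1 * z1 + z2 * z2))). lra.
  - rewrite <- (sqrt_square (x1 * z1 + x2 * z2)) at 1 by lra.
    apply sqrt_le_1_alt.
    (* Lagrange's identity *)
    pose proof (Rle_0_sqr (x1 * z2 - x2 * z1)). unfold Rsqr in *. nra.
Qed.

Lemma halfspace_convex (x c0 : pt) : convex (halfspace x c0).
Proof.
  intros y z l hy hz hl. unfold halfspace in *.
  replace (psub (padd (pscal (1 - l) y) (pscal l z)) c0)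
    with (padd (pscal (1 - l) (psub y c0)) (pscal l (psub z c0)))
    by (unfold padd, pscal, psub; simpl; f_equal; ring).
  rewrite dot_padd_r, !dot_pscal_r. nra.
Qed.

Lemma halfspace_closed (x c0 : pt) : closed (halfspace x c0).
Proof.
  intros q Hq. unfold halfspace in *.
  destruct (Rle_or_lt (dot x (psub q c0)) 0) as [h|h]; [exact h|exfalso].
  pose proof (sqrt_pos (dot x x)) as hx. fold (pnorm x) in hx.
  destruct (Hq (dot x (psub q c0) / (pnorm x + 1))) as [y [hy hqy]].
  { apply Rdiv_lt_0_compat; lra. }
  assert (E : dot x (psub q c0) = dot x (psub q y) + dot x (psub y c0))
    by (rewrite !dot_psub_r; ring).
  pose proof (dot_le_pnorm x (psub q y)) as hcs.
  pose proof (sqrt_pos (dot (psub q y) (psub q y))) as hn. fold (pnorm (psub q y)) in hn.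
  apply (Rmult_lt_compat_l (pnorm x + 1)) in hqy; [|lra].
  replace ((pnorm x + 1) * (dot x (psub q c0) / (pnorm x + 1)))
    with (dot x (psub q c0)) in hqy by (field; lra).
  nra.
Qed.

Lemma clco_sub_halfspace (S : pt -> Prop) (x c0 : pt) :
  (forall y, S y -> halfspace x c0 y) -> forall q, clco S q -> halfspace x c0 q.
Proof.
  intros hS q hq. exact (hq _ (halfspace_convex x c0) (halfspace_closed x c0) hS).
Qed.

Lemma clco_segment (S : pt -> Prop) (y z : pt) (l : R) :
  S y -> S z -> 0 <= l <= 1 -> clco S (padd (pscal (1 - l) y) (pscal l z)).
Proof. intros hy hz hl C hconv _ hS. apply hconv; auto. Qed.

Lemma is_proj_of_normal (C : pt -> Prop) (c0 x : pt) :
  C c0 -> (forall q, C q -> halfspace x c0 q) -> is_proj C (padd c0 x) c0.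
Proof.
  intros hc hq. split; [exact hc|]. intros q Cq. specialize (hq q Cq).
  unfold halfspace, pnorm in *. apply sqrt_le_1_alt.
  destruct x as [x1 x2], q as [q1 q2], c0 as [c1 c2].
  unfold dot, psub, padd in *; simpl in *.
  pose proof (Rle_0_sqr (q1 - c1)). pose proof (Rle_0_sqr (q2 - c2)).
  unfold Rsqr in *. nra.
Qed.

Lemma is_proj_singleton (a u : pt) : is_proj (fun x => x = a) u a.
Proof. split; [reflexivity|]. intros q ->. lra. Qed.

Lemma eps_cycle_of_normal (a b c : pt) (D3 : pt -> Prop) (r : R) :
  0 <= r < 1 -> D3 c ->
  (forall q, D3 q -> halfspace (padd (psub b c) (pscal r (psub a c))) c q) ->
  exists u1 u2 u3, eps_cycle_support (fun x => x = a) (fun x => x = b) D3 (1 - r)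
                     u1 u2 u3 a b c.
Proof.
  intros hr hc hnormal.
  set (y := padd (psub b c) (pscal r (psub a c))) in *.
  assert (hg : 0 < 1 + r + r * r) by nra.
  set (x := pscal (/ (1 + r + r * r)) y).
  exists (padd a (pscal r (psub (padd c (pscal r x)) a))), (padd c x), (padd c (pscal r x)).
  split; [lra|].
  split; [apply is_proj_singleton|].
  split; [apply is_proj_singleton|].
  split.
  { apply is_proj_of_normal; [exact hc|]. intros q hq. unfold halfspace, x.
    rewrite dot_pscal_l. specialize (hnormal q hq). unfold halfspace in hnormal.
    pose proof (Rinv_0_lt_compat _ hg). nra. }
  unfold x, y; destruct a, b, c; unfold padd, pscal, psub; simpl.
  split; [|split]; f_equal; field; lra.
Qed.

Lemma sin_add_le (A B : R) :
  0 <= A -> 0 <= B -> A + B <= PI -> sin (A + B) <= sin A + sin B.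
Proof.
  intros hA hB hAB. pose proof PI_RGT_0.
  pose proof (sin_ge_0 A hA ltac:(lra)). pose proof (sin_ge_0 B hB ltac:(lra)).
  pose proof (COS_bound A). pose proof (COS_bound B).
  rewrite sin_plus. nra.
Qed.

Lemma cos_le_sin (x : R) : PI / 4 <= x <= PI / 2 -> cos x <= sin x.
Proof.
  intros h. pose proof PI_RGT_0. rewrite <- sin_shift.
  destruct (Rle_lt_or_eq_dec (PI / 2 - x) x ltac:(lra)) as [h'|h'].
  - left. apply sin_increasing_1; lra.
  - rewrite h'. lra.
Qed.

Lemma sin_add_cos_decreasing (p q : R) :
  PI / 4 <= p -> p < q -> q <= 5 * PI / 4 -> sin q + cos q < sin p + cos p.
Proof.
  intros hp hpq hq. pose proof PI_RGT_0.
  assert (E : forall x, sin x + cos x = sqrt 2 * cos (x - PI / 4)).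
  { intros x. rewrite cos_minus, cos_PI4, sin_PI4.
    pose proof (sqrt_lt_R0 2 ltac:(lra)). field. lra. }
  rewrite !E. apply Rmult_lt_compat_l; [apply sqrt_lt_R0; lra|].
  apply cos_decreasing_1; lra.
Qed.

Lemma dot_perp_chord_cis (p q u : R) :
  dot (perp (psub (cis q) (cis p))) (cis u) = sin (q - u) - sin (p - u).
Proof. unfold dot, perp, psub, cis; simpl. rewrite !sin_minus. ring. Qed.

Lemma arc_below_chord (p q u s : R) :
  p <= q -> (u <= p /\ q - u <= PI) \/ (q <= u /\ u - p <= PI) ->
  halfspace (perp (psub (cis q) (cis p)))
            (padd (pscal (1 - s) (cis p)) (pscal s (cis q))) (cis u).
Proof.
  intros hpq hu. unfold halfspace.
  rewrite dot_psub_r, dot_padd_r, !dot_pscal_r, !dot_perp_chord_cis.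
  rewrite !Rminus_diag, sin_0.
  replace (p - q) with (- (q - p)) by ring. rewrite sin_neg.
  destruct hu as [[h1 h2]|[h1 h2]].
  - pose proof (sin_add_le (p - u) (q - p) ltac:(lra) ltac:(lra) ltac:(lra)) as hs.
    replace (p - u + (q - p)) with (q - u) in hs by ring. lra.
  - pose proof (sin_add_le (u - q) (q - p) ltac:(lra) ltac:(lra) ltac:(lra)) as hs.
    replace (u - q + (q - p)) with (- (p - u)) in hs by ring.
    replace (u - q) with (- (q - u)) in hs by ring.
    rewrite !sin_neg in hs. lra.
Qed.

Lemma chord_dir_bounds (p q : R) :
  PI / 4 <= p -> p < q -> q <= PI / 2 ->
  0 < snd (psub (cis q) (cis p)) < - fst (psub (cis q) (cis p)).
Proof.
  intros hp hpq hq. pose proof PI_RGT_0. unfold psub, cis; simpl.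
  pose proof (sin_increasing_1 p q ltac:(lra) ltac:(lra) ltac:(lra) ltac:(lra) hpq).
  pose proof (sin_add_cos_decreasing p q hp hpq ltac:(lra)).
  lra.
Qed.

Lemma chord_point_bounds (p q s : R) :
  PI / 4 <= p <= PI / 2 -> PI / 4 <= q <= PI / 2 -> 0 <= s <= 1 ->
  let c := padd (pscal (1 - s) (cis p)) (pscal s (cis q)) in
  0 <= fst c <= snd c /\ snd c <= 1.
Proof.
  intros hp hq hs c. pose proof PI_RGT_0. unfold c, padd, pscal, cis; simpl.
  pose proof (cos_ge_0 p ltac:(lra) ltac:(lra)). pose proof (cos_ge_0 q ltac:(lra) ltac:(lra)).
  pose proof (cos_le_sin p hp). pose proof (cos_le_sin q hq).
  pose proof (SIN_bound p). pose proof (SIN_bound q).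
  nra.
Qed.

Section Corners.

Variables c d : pt.
Hypothesis hd : 0 < snd d < - fst d.
Hypothesis hc : 0 <= fst c <= snd c /\ snd c <= 1.

Lemma corner_dots_signs :
  0 < dot (psub (-2, 2) c) d /\ dot (psub (2, 2) c) d < 0 /\
  0 < dot (psub (-2, 2) c) d + dot (psub (2, 2) c) d.
Proof.
  destruct c as [c1 c2], d as [d1 d2]; unfold dot, psub in *; simpl in *.
  split; [|split]; nra.
Qed.

Lemma corner_combination_outward (r : R) :
  0 <= r < 1 -> 0 < dot (padd (psub (2, 2) c) (pscal r (psub (-2, 2) c))) (perp d).
Proof.
  intros hr.
  destruct c as [c1 c2], d as [d1 d2]; unfold dot, padd, pscal, psub, perp in *; simpl in *.
  (* with e = - d1 > f = d2: (1 + r) (2 - c2) e > (1 + r) f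
     and (2 - c1) f - r (2 + c1) f >= (1 - 3 r) f *)
  assert (0 <= (1 - c2) * (- d1) * (1 + r)) by (apply Rmult_le_pos; [apply Rmult_le_pos|]; lra).
  assert (0 <= (1 - c1) * d2 * (1 + r)) by (apply Rmult_le_pos; [apply Rmult_le_pos|]; lra).
  assert (0 < (- d1 - d2) * (1 + r)) by (apply Rmult_lt_0_compat; lra).
  assert (0 < d2 * (1 - r)) by (apply Rmult_lt_0_compat; lra).
  nra.
Qed.

End Corners.

Lemma neg_ratio_in_unit (A B : R) : 0 < A -> B < 0 -> 0 < A + B -> 0 < - B / A < 1.
Proof.
  intros hA hB hAB. split.
  - apply Rdiv_lt_0_compat; lra.
  - apply (Rmult_lt_reg_r A); [exact hA|].
    replace (- B / A * A) with (- B) by (field; lra). lra.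
Qed.

Section Angles.

Variable t : nat -> R.
Hypothesis Hinc : forall n : nat, (1 <= n)%nat -> t n < t (S n).

Lemma angle_le (i j : nat) : (1 <= i)%nat -> (i <= j)%nat -> t i <= t j.
Proof.
  intros hi hij. induction hij as [|j hij IH]; [lra|].
  pose proof (Hinc j ltac:(lia)). lra.
Qed.

Hypothesis H1 : t 1%nat = PI / 4.
Hypothesis Hlim : Un_cv t (PI / 2).

Lemma angle_range (n : nat) : (1 <= n)%nat -> PI / 4 <= t n < PI / 2.
Proof.
  intros hn. split.
  - rewrite <- H1. exact (angle_le 1 n (le_n 1) hn).
  - assert (hgrow : Un_growing (fun m => t (m + 1)%nat)).
    { intros m. rewrite !Nat.add_1_r. left. apply Hinc. lia. }
    pose proof (growing_ineq _ _ hgrow (CV_shift' t 1 _ Hlim) n) as hle.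
    cbv beta in hle. rewrite Nat.add_1_r in hle. pose proof (Hinc n hn). lra.
Qed.

Lemma angle_below_chord (k m : nat) (s : R) : (1 <= k)%nat -> (1 <= m)%nat ->
  halfspace (perp (psub (cis (t (S k))) (cis (t k))))
            (padd (pscal (1 - s) (cis (t k))) (pscal s (cis (t (S k))))) (cis (t m)).
Proof.
  intros hk hm. pose proof PI_RGT_0.
  pose proof (angle_range k hk). pose proof (angle_range (S k) ltac:(lia)).
  pose proof (angle_range m hm).
  apply arc_below_chord; [pose proof (Hinc k hk); lra|].
  destruct (Nat.le_gt_cases m k) as [h|h].
  - left. pose proof (angle_le m k hm h). lra.
  - right. pose proof (angle_le (S k) m ltac:(lia) h). lra.
Qed.

End Angles.

Theorem proposition3 (t : nat -> R)
  (Hinc : forall n : nat, (1 <= n)%nat -> t n < t (S n))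
  (H1 : t 1%nat = PI / 4)
  (Hlim : Un_cv t (PI / 2))
  (k : nat) (hk : (1 <= k)%nat) :
  let v := fun n : nat => (cos (t n), sin (t n)) : pt in
  let a : pt := (-2, 2) in
  let b : pt := (2, 2) in
  let C1 := fun x : pt => x = a in
  let C2 := fun x : pt => x = b in
  let C3 := clco (fun x : pt => exists n : nat, (1 <= n)%nat /\ x = v n) in
  let dk := pscal (/ pnorm (psub (v (S k)) (v k))) (psub (v (S k)) (v k)) in
  forall s : R, 0 <= s < 1 ->
    let c := padd (pscal (1 - s) (v k)) (pscal s (v (S k))) in
    let eps := 1 + dot (psub b c) dk / dot (psub a c) dk in
    dot (psub a c) dk <> 0 /\ 0 < eps < 1 /\
    exists u1 u2 u3 : pt, eps_cycle_support C1 C2 C3 eps u1 u2 u3 a b c.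
Proof.
  intros v a b C1 C2 C3 dk s hs c eps.
  pose proof (angle_range t Hinc H1 Hlim k hk) as hrk.
  pose proof (angle_range t Hinc H1 Hlim (S k) ltac:(lia)) as hrk1.
  set (d := psub (v (S k)) (v k)) in *.
  assert (hd : 0 < snd d < - fst d) by (apply chord_dir_bounds; [lra | apply Hinc, hk | lra]).
  assert (hc : 0 <= fst c <= snd c /\ snd c <= 1) by (apply chord_point_bounds; lra).
  destruct (corner_dots_signs c d hd hc) as [hA [hB hAB]]. fold a b in hA, hB, hAB.
  assert (hdd : 0 < dot d d) by (unfold dot; nra).
  assert (hL : 0 < pnorm d) by (apply sqrt_lt_R0, hdd).
  set (r := - dot (psub b c) d / dot (psub a c) d).
  assert (Heps : eps = 1 - r).
  { unfold eps, dk, r. rewrite !dot_pscal_r. field. split; lra. }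
  pose proof (neg_ratio_in_unit _ _ hA hB hAB) as hr. fold r in hr.
  split.
  { unfold dk. rewrite dot_pscal_r.
    apply Rgt_not_eq, Rmult_lt_0_compat; [apply Rinv_0_lt_compat|]; assumption. }
  split; [lra|].
  rewrite Heps. apply eps_cycle_of_normal; [lra| |].
  - apply clco_segment; [exists k | exists (S k) | lra]; auto.
  - apply clco_sub_halfspace. intros y [m [hm ->]].
    apply (dot_nonpos_of_orth _ _ d hdd).
    + rewrite dot_padd_l, dot_pscal_l. unfold r. field. lra.
    + left. apply corner_combination_outward; [exact hd | exact hc | lra].
    + exact (angle_below_chord t Hinc H1 Hlim k m s hk hm).
Qed.
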